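(* Consider SEMO or GSEMO on \textsc{OneMinMax} with a parent selection mechanism such that, in every iteration in which the population does not yet cover the Pareto front, the probability of selecting a good individual is at least $p_{\mathrm{good}}$. Then the expected time to find all solutions of the Pareto front of \textsc{OneMinMax} is $O((n\log n)/p_{\mathrm{good}})$.
   Context: Search space $\{0,1\}^n$; objectives maximised. $\textsc{OneMinMax}(x)=(\sum_ix_i,\,n-\sum_ix_i)$; every point is Pareto optimal, Pareto front $F^*=\{(i,n-i):0\le i\le n\}$. Dominance: $y$ dominates $x$ if $f_i(y)\ge f_i(x)$ for all $i$, strictly for some $i$; weakly dominates if $\ge$ in all. SEMO/GSEMO with a parent selection mechanism: start with uniform random $s$, $P=\{s\}$. Each iteration: choose a parent $s\in P$ by the mechanism; create $s'$ by flipping one uniformly random bit (SEMO) or each bit independently with probability $1/n$ (GSEMO); if $s'$ is not dominated by any member of $P$, add it and remove all members weakly dominated by $s'$. Time = number of iterations until $f(P)=F^*$. Good: w.r.t. $P$, $x\in P$ is good if some Hamming neighbour $y$ of $x$ satisfies $f(y)\notin f(P)$. *)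

From HB Require Import structures.
From mathcomp Require Import all_boot all_order all_algebra.
From mathcomp Require Import all_classical all_reals all_analysis.
Set Implicit Arguments. Unset Strict Implicit. Unset Printing Implicit Defensive.
Import Order.TTheory GRing.Theory Num.Theory.
Local Open Scope ring_scope.

Definition bs (n : nat) := {ffun 'I_n -> bool}.

Definition ones n (x : bs n) : nat := #|[set i | x i]|.

Definition omm n (x : bs n) : nat * nat := (ones x, (n - ones x)%N).

Definition weakdom n (f : bs n -> nat * nat) (y x : bs n) : bool :=
  ((f x).1 <= (f y).1)%N && ((f x).2 <= (f y).2)%N.
Definition dom n (f : bs n -> nat * nat) (y x : bs n) : bool :=
  weakdom f y x && (((f x).1 < (f y).1)%N || ((f x).2 < (f y).2)%N).

Definition update n (P : {set bs n}) (y : bs n) : {set bs n} :=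
  if [exists z in P, dom (@omm n) z y] then P
  else y |: [set z in P | ~~ weakdom (@omm n) y z].

Definition covers n (P : {set bs n}) : bool :=
  [forall i : 'I_n.+1, exists x in P, omm x == pair (val i) (n - val i)%N ].

Definition hamming n (x y : bs n) : nat := #|[set i | x i != y i]|.

Definition good n (P : {set bs n}) (x : bs n) : bool :=
  [exists y : bs n, (hamming x y == 1%N) &&
     ~~ [exists z in P, omm z == omm y]].

Inductive algo := SEMO | GSEMO.

Definition mutprob (R : realType) (A : algo) n (x y : bs n) : R :=
  match A with
  | SEMO => if hamming x y == 1%N then n%:R^-1 else 0
  | GSEMO => (n%:R^-1) ^+ (hamming x y) * (1 - n%:R^-1) ^+ (n - hamming x y)
  end.

(* A run is described by the initial point s0 and the sequence of records
   (parent, offspring) of the iterations performed so far.  The population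
   after the history h: *)
Definition pop n (s0 : bs n) (h : seq (bs n * bs n)) : {set bs n} :=
  foldl (fun P r => update P r.2) [set s0] h.

(* A parent selection mechanism: given the full history (s0, h), the
   probability sel s0 h x of choosing x as parent.  It may depend on the
   whole history (not only on the current population). *)
Definition valid_sel (R : realType) n
    (sel : bs n -> seq (bs n * bs n) -> bs n -> R) : Prop :=
  forall s0 h,
    (forall x, 0 <= sel s0 h x) /\
    (forall x, x \notin pop s0 h -> sel s0 h x = 0) /\
    \sum_(x in pop s0 h) sel s0 h x = 1.

Definition good_sel (R : realType) n
    (sel : bs n -> seq (bs n * bs n) -> bs n -> R) (p : R) : Prop :=
  forall s0 h, ~~ covers (pop s0 h) ->
    p <= \sum_(x in pop s0 h | good (pop s0 h) x) sel s0 h x.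

Definition run_prob (R : realType) (A : algo) n
    (sel : bs n -> seq (bs n * bs n) -> bs n -> R)
    (s0 : bs n) (h : seq (bs n * bs n)) : R :=
  (2%:R ^+ n)^-1 *
  \prod_(i < size h)
     (sel s0 (take i h) (nth (s0, s0) h i).1 *
      mutprob R A (nth (s0, s0) h i).1 (nth (s0, s0) h i).2).

(* P(T > t): none of the populations P_0, ..., P_t covers the front. *)
Definition tail_prob (R : realType) (A : algo) n
    (sel : bs n -> seq (bs n * bs n) -> bs n -> R) (t : nat) : R :=
  \sum_(s0 : bs n) \sum_(h : t.-tuple (bs n * bs n))
     (if [forall i : 'I_t.+1, ~~ covers (pop s0 (take i h))]
      then @run_prob R A n sel s0 h else 0).

(* E[T] <= B, with E[T] = sum_{t>=0} P(T > t) (tail-sum formula for a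
   nonnegative integer random variable; the series has nonnegative terms). *)
Definition expected_time_le (R : realType) (A : algo) n
    (sel : bs n -> seq (bs n * bs n) -> bs n -> R) (B : R) : Prop :=
  forall N : nat, \sum_(t < N) @tail_prob R A n sel t <= B.

From HB Require Import structures.
From mathcomp Require Import all_boot all_order all_algebra.
From mathcomp Require Import all_classical all_reals all_analysis.
From mathcomp Require Import zify ring lra.
Import Order.TTheory GRing.Theory Num.Theory.
Local Open Scope ring_scope.
Set Implicit Arguments. Unset Strict Implicit. Unset Printing Implicit Defensive.

(* Drift of a potential. Level k (the strings with k ones) gets weight
   1/(k+1) + 1/(n-k+1), and the potential of a population is the total weight
   of its uncovered levels, at most 2 H_(n+1) <= 8 ln n.  OneMinMax has no
   dominated points, so covered levels stay covered.  A good parent x has a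
   neighbour on an uncovered level k, and flipping any bit of x that agrees
   with the flipped one also lands on level k; there are k+1 or n-k+1 such
   bits, so one mutation of x removes expected weight at least
   (1/n)(1-1/n)^(n-1) >= 1/(4n).  As long as the front is not covered a good
   parent is chosen with probability >= p, hence the expected potential on
   the event {T > t} drops by p/(4n) P(T > t) per iteration, and summing over
   t gives E[T] <= 32 n ln n / p. *)

Section BitStrings.
Variable n : nat.
Implicit Types x y z : bs n.

Lemma ones_le x : (ones x <= n)%N.
Proof. by rewrite /ones (leq_trans (max_card _)) // card_ord. Qed.

Lemma card_zeros x : #|[set i | ~~ x i]| = (n - ones x)%N.
Proof.
have := cardC [set i | x i]; rewrite card_ord.
have -> : #|[predC [set i | x i]]| = #|[set i | ~~ x i]| by apply: eq_card => i; rewrite !inE.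
rewrite /ones; lia.
Qed.

Lemma eq_omm y z : (omm z == omm y) = (ones z == ones y).
Proof. by rewrite /omm xpair_eqE; case: (ones z =P ones y) => [->|]; rewrite ?eqxx. Qed.

Definition flip x (i : 'I_n) : bs n := [ffun j => if j == i then ~~ x j else x j].

Lemma flip_inj x : injective (flip x).
Proof.
move=> i j /ffunP /(_ i); rewrite !ffunE eqxx.
by case: (i =P j) => // _; case: (x i).
Qed.

Lemma hamming_flip x i : hamming x (flip x i) = 1%N.
Proof.
rewrite /hamming -(cards1 i); apply: eq_card => j.
rewrite !inE ffunE; case: (j =P i) => [->|_]; first by case: (x i).
by rewrite eqxx.
Qed.

Lemma hamming1_flip x y : hamming x y = 1%N -> exists i, y = flip x i.
Proof.
move=> /eqP /cards1P [i Hi]; exists i; apply/ffunP => j; rewrite ffunE.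
have : (j \in [set i | x i != y i]) = (j \in [set i]) by rewrite Hi.
rewrite !inE; case: (j =P i) => [->|_].
- by case: (x i); case: (y i).
- by case: (x j); case: (y j).
Qed.

Lemma ones_flip x i :
  ones (flip x i) = (if x i then (ones x).-1 else (ones x).+1)%N.
Proof.
rewrite /ones; case Hx: (x i).
- have -> : [set j | x j] = i |: [set j | flip x i j].
    by apply/setP => j; rewrite !inE ffunE; case: (j =P i) => [->|_]; rewrite ?Hx ?eqxx.
  by rewrite cardsU1 inE ffunE eqxx Hx.
- have -> : [set j | flip x i j] = i |: [set j | x j].
    by apply/setP => j; rewrite !inE ffunE; case: (j =P i) => [->|_]; rewrite ?Hx ?eqxx.
  by rewrite cardsU1 inE Hx.
Qed.

End BitStrings.

Section Population.
Variable n : nat.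
Implicit Types (y : bs n) (P : {set bs n}).

Definition level_covered P (k : nat) : bool :=
  [exists z in P, ones z == k].

(* On OneMinMax no point is dominated, so every offspring is accepted. *)
Lemma update_omm P y :
  update P y = y |: [set z in P | ~~ weakdom (@omm n) y z].
Proof.
rewrite /update; case: ifP => // /existsP [z /andP [_]].
rewrite /dom /weakdom /omm /= => /andP [/andP [h1 h2] h3].
by have := ones_le y; have := ones_le z; lia.
Qed.

Lemma mem_update P y : y \in update P y.
Proof. by rewrite update_omm setU11. Qed.

(* A member removed by the update is weakly dominated by the offspring, hence
   lies on the same level. *)
Lemma level_covered_update P y k :
  level_covered P k -> level_covered (update P y) k.
Proof.
move=> /existsP [z /andP [zP /eqP zk]]; apply/existsP.
case Hw: (weakdom (@omm n) y z).
- exists y; rewrite mem_update /=.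
  move: Hw; rewrite /weakdom /omm /= => /andP [h1 h2].
  by apply/eqP; have := ones_le y; have := ones_le z; lia.
- by exists z; rewrite update_omm !inE zP Hw zk eqxx orbT.
Qed.

End Population.

Lemma ler_sum_inj (R : numDomainType) (I T : finType) (f : I -> T)
    (F : T -> R) (S : {set I}) :
  (forall y, 0 <= F y) -> injective f -> \sum_(i in S) F (f i) <= \sum_y F y.
Proof.
move=> F0 finj; rewrite -(big_imset _ (h := f)); last by move=> i j _ _ /finj.
by rewrite [X in _ <= X](bigID (mem (f @: S))) /= lerDl sumr_ge0.
Qed.

Lemma invn_le1 (R : numFieldType) (n : nat) : n%:R^-1 <= 1 :> R.
Proof. by case: n => [|n]; rewrite ?invr0 ?ler01 // invf_le1 ?ler1n ?ltr0n. Qed.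

Section Mutation.
Variables (R : realType) (n : nat).
Implicit Types x y : bs n.

Definition flip_prob : R := n%:R^-1 * (1 - n%:R^-1) ^+ n.-1.

Lemma flip_prob_ge0 : 0 <= flip_prob.
Proof. by rewrite mulr_ge0 ?invr_ge0 ?exprn_ge0 ?subr_ge0 ?invn_le1. Qed.

Lemma mutprob_ge0 A x y : 0 <= mutprob R A x y.
Proof.
case: A => /=; first by case: ifP; rewrite ?invr_ge0.
by rewrite mulr_ge0 ?exprn_ge0 ?invr_ge0 ?subr_ge0 ?invn_le1.
Qed.

Lemma flip_prob_le_mutprob A x i : flip_prob <= mutprob R A x (flip x i).
Proof.
rewrite /flip_prob; case: A => /=; rewrite hamming_flip ?eqxx.
- by rewrite ler_piMr ?invr_ge0 // exprn_ile1 ?subr_ge0 ?invn_le1 // lerBlDr lerDl invr_ge0.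
- by rewrite expr1 subn1.
Qed.

Lemma sum_mutprob_SEMO x : \sum_y mutprob R SEMO x y <= 1.
Proof.
rewrite -big_mkcond sumr_const.
have card_nbh : (#|[pred y | hamming x y == 1%N]| <= n)%N.
  rewrite -[X in (_ <= X)%N]card_ord -(card_imset _ (@flip_inj n x)) subset_leq_card //.
  by apply/fintype.subsetP => y /eqP /hamming1_flip [i ->]; apply: imset_f.
apply: le_trans (_ : n%:R^-1 *+ n <= 1); first by apply: ler_wpMn2l; rewrite ?invr_ge0.
have [->|n_gt0] := posnP n; first by rewrite mulr0n ler01.
by rewrite -(mulr_natr n%:R^-1) mulVf ?pnatr_eq0 -?lt0n.
Qed.

(* Distribute the product over the bits of [1 = 1/n + (1 - 1/n)]. *)
Lemma sum_mutprob_GSEMO x : \sum_y mutprob R GSEMO x y = 1.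
Proof.
set a : R := n%:R^-1.
have <- : \prod_(i < n) \sum_(c : bool) (if x i != c then a else 1 - a) = 1.
  by apply: big1 => i _; rewrite big_bool; case: (x i) => /=; ring.
rewrite bigA_distr_bigA /=; apply: eq_bigr => y _.
rewrite (bigID (fun i => x i != y i)) /=.
rewrite (eq_bigr (fun=> a)) => [|i /negPf -> //].
rewrite [X in _ = _ * X](eq_bigr (fun=> 1 - a)) => [|i /negPf -> //].
rewrite !prodr_const; congr (_ ^+ _ * _ ^+ _).
- by apply: eq_card => i; rewrite !inE.
- have := cardsC [set i | x i != y i]; rewrite card_ord /hamming => E.
  by rewrite -[X in (X - _)%N]E addKn; apply: eq_card => i; rewrite !inE.
Qed.

Lemma sum_mutprob_le1 A x : \sum_y mutprob R A x y <= 1.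
Proof. by case: A; rewrite ?sum_mutprob_SEMO ?sum_mutprob_GSEMO. Qed.

End Mutation.

Section Potential.
Variables (R : realType) (n : nat).
Implicit Types (x y : bs n) (P : {set bs n}).

Definition level_weight (k : nat) : R := k.+1%:R^-1 + (n - k).+1%:R^-1.

Definition uncovered_weight P (k : nat) : R :=
  if level_covered P k then 0 else level_weight k.

Definition potential P : R := \sum_(k < n.+1) uncovered_weight P k.

Lemma level_weight_ge0 k : 0 <= level_weight k.
Proof. by rewrite addr_ge0 // invr_ge0. Qed.

Lemma uncovered_weight_ge0 P k : 0 <= uncovered_weight P k.
Proof. by rewrite /uncovered_weight; case: ifP => // _; apply: level_weight_ge0. Qed.

Lemma potential_ge0 P : 0 <= potential P.
Proof. exact/sumr_ge0/(fun k _ => uncovered_weight_ge0 P k). Qed.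

Lemma potential_le P : potential P <= \sum_(k < n.+1) level_weight k.
Proof.
by apply: ler_sum => k _; rewrite /uncovered_weight; case: ifP => // _; apply: level_weight_ge0.
Qed.

Lemma potential_update P y :
  potential (update P y) + uncovered_weight P (ones y) <= potential P.
Proof.
have hy : (ones y < n.+1)%N by rewrite ltnS ones_le.
rewrite /potential (bigD1 (Ordinal hy)) //= [leRHS](bigD1 (Ordinal hy)) //=.
have -> : uncovered_weight (update P y) (ones y) = 0.
  by rewrite /uncovered_weight ifT //; apply/existsP; exists y; rewrite mem_update eqxx.
rewrite add0r addrC lerD2r; apply: ler_sum => k _; rewrite /uncovered_weight.
case: ifP => [_|uncov]; first by case: ifP => // _; apply: level_weight_ge0.
by rewrite ifN //; apply: contraFN uncov; apply: level_covered_update.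
Qed.

(* The set has k+1 or n-k+1 elements, k the level of [flip x i]: this is
   where the level weights come from. *)
Lemma inv_card_same_bits_le x i :
  #|[set j | x j == x i]|%:R^-1 <= level_weight (ones (flip x i)).
Proof.
rewrite /level_weight ones_flip; case Hx: (x i).
- have -> : #|[set j | x j == true]| = ones x.
    by apply: eq_card => j; rewrite !inE eqb_id.
  have ones_gt0 : (0 < ones x)%N by apply/card_gt0P; exists i; rewrite inE.
  by rewrite prednK // lerDl invr_ge0.
- have -> : #|[set j | x j == false]| = (n - ones x)%N.
    by rewrite -card_zeros; apply: eq_card => j; rewrite !inE eqbF_neg.
  have zeros_gt0 : (0 < n - ones x)%N.
    by rewrite -card_zeros; apply/card_gt0P; exists i; rewrite inE Hx.
  have -> : (n - (ones x).+1).+1 = (n - ones x)%N by lia.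
  by rewrite lerDr invr_ge0.
Qed.

Lemma good_mutation_gain A P x : good P x ->
  flip_prob R n <= \sum_y mutprob R A x y * uncovered_weight P (ones y).
Proof.
move=> /existsP [_ /andP [/eqP /hamming1_flip [i ->] fresh]].
set S := [set j | x j == x i].
have S_gt0 : (0 < #|S|)%N by apply/card_gt0P; exists i; rewrite inE.
have uncovered : ~~ level_covered P (ones (flip x i)).
  apply: contra fresh => /existsP [z /andP [zP zk]].
  by apply/existsP; exists z; rewrite zP eq_omm.
have same_level j : j \in S -> ones (flip x j) = ones (flip x i).
  by rewrite inE !ones_flip => /eqP ->.
apply: le_trans (ler_sum_inj S _ (@flip_inj n x)); last first.
  by move=> y; rewrite mulr_ge0 ?mutprob_ge0 ?uncovered_weight_ge0.
apply: le_trans (_ : \sum_(j in S) flip_prob R n * #|S|%:R^-1 <= _).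
  by rewrite sumr_const -(mulr_natr (flip_prob R n * _)) -mulrA mulVf ?mulr1 // pnatr_eq0 -lt0n.
apply: ler_sum => j jS; rewrite /uncovered_weight same_level // (negbTE uncovered).
by rewrite ler_pM ?flip_prob_ge0 ?invr_ge0 ?flip_prob_le_mutprob ?inv_card_same_bits_le.
Qed.

(* The sum is the expected potential after one iteration with parent
   distribution [w]. *)
Lemma potential_drift A P (w : bs n -> R) p :
  (forall x, 0 <= w x) -> \sum_x w x <= 1 -> p <= \sum_(x | good P x) w x ->
  \sum_(r : bs n * bs n) w r.1 * mutprob R A r.1 r.2 * potential (update P r.2)
    + p * flip_prob R n <= potential P.
Proof.
move=> w_ge0 w_le1 w_good.
pose gain x := \sum_y mutprob R A x y * uncovered_weight P (ones y).
have gain_ge0 x : 0 <= gain x.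
  by apply: sumr_ge0 => y _; rewrite mulr_ge0 ?mutprob_ge0 ?uncovered_weight_ge0.
have parent_step x : \sum_y mutprob R A x y * potential (update P y)
    <= potential P - gain x.
  apply: le_trans (_ : \sum_y mutprob R A x y * (potential P - uncovered_weight P (ones y)) <= _).
    by apply: ler_sum => y _; rewrite ler_wpM2l ?mutprob_ge0 // lerBrDr potential_update.
  under eq_bigr do rewrite mulrBr.
  rewrite sumrB -mulr_suml lerD2r ler_piMl ?potential_ge0 //.
  exact: sum_mutprob_le1.
have good_gain : p * flip_prob R n <= \sum_x w x * gain x.
  rewrite (bigID (fun x => good P x)) /= -[leLHS]addr0 lerD //; last first.
    by apply: sumr_ge0 => x _; rewrite mulr_ge0.
  apply: le_trans (_ : \sum_(x | good P x) w x * flip_prob R n <= _).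
    by rewrite -mulr_suml ler_wpM2r ?flip_prob_ge0.
  by apply: ler_sum => x gx; rewrite ler_wpM2l ?good_mutation_gain.
rewrite -(pair_bigA _ (fun x y => w x * mutprob R A x y * potential (update P y))) /=.
apply: le_trans (_ : \sum_x w x * (potential P - gain x) + p * flip_prob R n <= _).
  rewrite lerD2r; apply: ler_sum => x _.
  under eq_bigr do rewrite -mulrA; rewrite -mulr_sumr.
  by rewrite ler_wpM2l.
under eq_bigr do rewrite mulrBr.
rewrite sumrB -mulr_suml.
have := ler_wpM2r (potential_ge0 P) w_le1; rewrite mul1r; lra.
Qed.

End Potential.

Lemma take_rcons_le (T : Type) (s : seq T) x i :
  (i <= size s)%N -> take i (rcons s x) = take i s.
Proof. by move=> hi; rewrite -cats1 takel_cat. Qed.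

Lemma sum_tuple_rcons (V : nmodType) (T : finType) t (F : seq T -> V) :
  \sum_(h : t.+1.-tuple T) F h = \sum_(h : t.-tuple T) \sum_(r : T) F (rcons h r).
Proof.
rewrite pair_bigA /=.
pose g (hr : t.-tuple T * T) := [tuple of rcons hr.1 hr.2].
pose g' (u : t.+1.-tuple T) :=
  ([tuple of belast (thead u) (behead_tuple u)], last (thead u) (behead u)).
rewrite (reindex g) //; exists g' => [[h r] _ | u _].
- have := congr1 val (tuple_eta [tuple of rcons h r]); rewrite /= lastI.
  by move=> /rcons_inj [belastE lastE]; congr (_, _); [apply: val_inj | ].
- by apply: val_inj; rewrite /= -lastI [in RHS](tuple_eta u).
Qed.

Section Runs.
Variables (R : realType) (A : algo) (n : nat).
Variables (sel : bs n -> seq (bs n * bs n) -> bs n -> R) (p : R).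
Hypotheses (sel_valid : valid_sel sel) (sel_good : good_sel sel p).
Implicit Types (h : seq (bs n * bs n)) (r : bs n * bs n).

Definition uncovered_run t (s0 : bs n) h : bool :=
  [forall i : 'I_t.+1, ~~ covers (pop s0 (take i h))].

(* The expectation of [potential (P_t)] on the event [T > t]. *)
Definition potential_mass t : R :=
  \sum_(s0 : bs n) \sum_(h : t.-tuple (bs n * bs n))
    (if uncovered_run t s0 h then run_prob A sel s0 h * potential R (pop s0 h) else 0).

Lemma pop_rcons (s0 : bs n) h r : pop s0 (rcons h r) = update (pop s0 h) r.2.
Proof. by rewrite /pop foldl_rcons. Qed.

Lemma sel_ge0 (s0 : bs n) h x : 0 <= sel s0 h x.
Proof. by have [sel_ge0 _] := sel_valid s0 h. Qed.

Lemma sum_sel (s0 : bs n) h : \sum_x sel s0 h x = 1.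
Proof.
have [_ [sel_out sel_sum1]] := sel_valid s0 h.
by rewrite (bigID (mem (pop s0 h))) /= sel_sum1 big1 ?addr0.
Qed.

Lemma drift_pop (s0 : bs n) h : ~~ covers (pop s0 h) ->
  \sum_r sel s0 h r.1 * mutprob R A r.1 r.2 * potential R (update (pop s0 h) r.2)
    + p * flip_prob R n <= potential R (pop s0 h).
Proof.
move=> /sel_good good_mass; apply: potential_drift; rewrite ?sum_sel //.
  exact: sel_ge0.
apply: le_trans good_mass _; rewrite big_mkcondl /=; apply: ler_sum => x _.
by case: ifP => // _; apply: sel_ge0.
Qed.

Lemma run_prob_rcons (s0 : bs n) h r :
  run_prob A sel s0 (rcons h r) = run_prob A sel s0 h * (sel s0 h r.1 * mutprob R A r.1 r.2).
Proof.
rewrite /run_prob size_rcons big_ord_recr /= -mulrA; congr (_ * (_ * _)).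
- apply: eq_bigr => i _.
  by rewrite take_rcons_le ?(ltnW (ltn_ord i)) // nth_rcons ltn_ord.
- by rewrite take_rcons_le // take_size nth_rcons ltnn eqxx.
Qed.

Lemma run_prob_ge0 (s0 : bs n) h : 0 <= run_prob A sel s0 h.
Proof.
rewrite mulr_ge0 ?invr_ge0 ?exprn_ge0 //.
by apply: prodr_ge0 => i _; rewrite mulr_ge0 ?sel_ge0 ?mutprob_ge0.
Qed.

Lemma tail_prob_ge0 t : 0 <= tail_prob A sel t.
Proof.
by apply: sumr_ge0 => s0 _; apply: sumr_ge0 => h _; case: ifP => // _; apply: run_prob_ge0.
Qed.

Lemma uncovered_run_rcons t (s0 : bs n) h r : size h = t ->
  uncovered_run t.+1 s0 (rcons h r) =
  uncovered_run t s0 h && ~~ covers (update (pop s0 h) r.2).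
Proof.
move=> size_h; rewrite /uncovered_run.
apply/forallP/andP => [unc|[/forallP unc unc_last] i].
- split; last by have := unc ord_max; rewrite /= -size_h -(size_rcons h r) take_size pop_rcons.
  apply/forallP => i; have := unc (widen_ord (leqnSn _) i).
  by rewrite /= take_rcons_le // size_h -ltnS.
- have [lt_it|ge_it] := ltnP i t.+1.
    by have := unc (Ordinal lt_it); rewrite /= take_rcons_le // size_h -ltnS.
  have -> : nat_of_ord i = t.+1 by have := ltn_ord i; lia.
  by rewrite -size_h -(size_rcons h r) take_size pop_rcons.
Qed.

Lemma uncovered_run_last t (s0 : bs n) h : size h = t ->
  uncovered_run t s0 h -> ~~ covers (pop s0 h).
Proof. by move=> size_h /forallP /(_ ord_max); rewrite /= -size_h take_size. Qed.

Lemma potential_mass_ge0 t : 0 <= potential_mass t.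
Proof.
apply: sumr_ge0 => s0 _; apply: sumr_ge0 => h _; case: ifP => // _.
by rewrite mulr_ge0 ?run_prob_ge0 ?potential_ge0.
Qed.

Lemma potential_mass_step t :
  potential_mass t.+1 + p * flip_prob R n * tail_prob A sel t <= potential_mass t.
Proof.
rewrite /potential_mass /tail_prob mulr_sumr -big_split /=; apply: ler_sum => s0 _.
rewrite (sum_tuple_rcons t (fun h => if uncovered_run t.+1 s0 h
  then run_prob A sel s0 h * potential R (pop s0 h) else 0)).
rewrite mulr_sumr -big_split /=; apply: ler_sum => h _.
have size_h := size_tuple h.
change [forall i : 'I_t.+1, _] with (uncovered_run t s0 h).
under eq_bigr do rewrite uncovered_run_rcons // run_prob_rcons pop_rcons.
case unc: (uncovered_run t s0 h) => /=; last by rewrite big1 ?mulr0 ?addr0.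
apply: le_trans (ler_wpM2l (run_prob_ge0 s0 h) (drift_pop (uncovered_run_last size_h unc))).
rewrite mulrDr [X in _ <= _ + X]mulrC lerD2r mulr_sumr.
apply: ler_sum => r _; case: ifP => _; first by rewrite !mulrA.
by rewrite mulr_ge0 ?run_prob_ge0 // mulr_ge0 ?potential_ge0 // mulr_ge0 ?sel_ge0 ?mutprob_ge0.
Qed.

Lemma potential_mass_telescope N :
  p * flip_prob R n * \sum_(t < N) tail_prob A sel t <= potential_mass 0 - potential_mass N.
Proof.
elim: N => [|N IH]; first by rewrite big_ord0 mulr0 subrr.
by rewrite big_ord_recr /= mulrDr; have := potential_mass_step N; lra.
Qed.

Lemma potential_mass0_le : potential_mass 0 <= \sum_(k < n.+1) level_weight R n k.
Proof.
set W := \sum_(k < n.+1) _.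
have W_ge0 : 0 <= W by apply: sumr_ge0 => k _; apply: level_weight_ge0.
have run_prob0 (s0 : bs n) (h : 0.-tuple (bs n * bs n)) : run_prob A sel s0 h = (2%:R ^+ n)^-1.
  by rewrite /run_prob size_tuple big_ord0 mulr1.
apply: le_trans (_ : \sum_(s0 : bs n) \sum_(h : 0.-tuple (bs n * bs n)) (2%:R ^+ n)^-1 * W <= _).
  apply: ler_sum => s0 _; apply: ler_sum => h _; rewrite run_prob0.
  by case: ifP => _; rewrite ?ler_wpM2l ?potential_le ?mulr_ge0 ?invr_ge0 ?exprn_ge0.
rewrite !sumr_const card_tuple expn0 card_ffun card_bool card_ord.
by rewrite mulr1n -(mulr_natr (_ * W)) mulrAC natrX mulVf ?mul1r ?expf_neq0 ?pnatr_eq0.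
Qed.

End Runs.

Section Estimates.
Variable R : realType.

Lemma expR_half_le2 : expR 2^-1 <= 2 :> R.
Proof.
have := expR_ge1Dx (- 2^-1 : R); rewrite expRN.
have : 0 < expR (2^-1 : R) by apply: expR_gt0.
set e := expR _ => e_gt0 le_inv.
have : 2^-1 <= e^-1 by lra.
by rewrite lef_pV2 ?posrE.
Qed.

Lemma expR1_le4 : expR 1 <= 4 :> R.
Proof.
have -> : (1 : R) = 2%:R * 2^-1 by rewrite divff.
rewrite expRM_natl.
have := expR_half_le2; have : 0 < expR (2^-1 : R) by apply: expR_gt0.
nra.
Qed.

Lemma ln2_ge_half : 2^-1 <= ln (2 : R).
Proof.
rewrite -[leLHS](expRK (2^-1 : R)).
by rewrite ler_ln ?posrE ?expR_gt0 // expR_half_le2.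
Qed.

Lemma invS_le_lnS_sub_ln (m : nat) : (0 < m)%N ->
  (m.+1%:R : R)^-1 <= ln m.+1%:R - ln m%:R.
Proof.
move=> m_gt0.
have m1_gt0 : (0 : R) < m.+1%:R by rewrite ltr0n.
have gt_N1 : -1 < - (m.+1%:R : R)^-1 by rewrite ltrN2 invf_lt1 // ltr1n ltnS.
have E : 1 - (m.+1%:R : R)^-1 = m%:R / m.+1%:R.
  by rewrite -[m.+1]addn1 natrD; field; rewrite natr1 pnatr_eq0.
have := le_ln1Dx gt_N1; rewrite E ln_div ?posrE ?ltr0n //.
by set c := _^-1; set a := ln _; set b := ln _ => ?; lra.
Qed.

Lemma harmonic_le_ln (m : nat) : (0 < m)%N ->
  \sum_(k < m) (k.+1%:R : R)^-1 <= 1 + ln m%:R.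
Proof.
case: m => // m _; elim: m => [|m IH]; first by rewrite big_ord1 ln1 addr0 invr1.
rewrite big_ord_recr /=; have := invS_le_lnS_sub_ln (ltn0Sn m); move: IH.
by set H := \sum_(i < m.+1) _; set c := _^-1; set a := ln _; set b := ln _ => ? ?; lra.
Qed.

Lemma sum_level_weight_le (n : nat) : (2 <= n)%N ->
  \sum_(k < n.+1) level_weight R n k <= 8 * ln n%:R.
Proof.
move=> n_ge2.
have -> : \sum_(k < n.+1) level_weight R n k = 2 * \sum_(k < n.+1) (k.+1%:R : R)^-1.
  rewrite big_split /= mulr2n mulrDl mul1r; congr (_ + _).
  rewrite (reindex_inj rev_ord_inj) /=; apply: eq_bigr => k _.
  by rewrite subSS subKn // -ltnS.
have n_gt0 : (0 : R) < n%:R by rewrite ltr0n; lia.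
have lnS_le : ln (n.+1%:R : R) <= ln 2 + ln n%:R.
  by rewrite -lnM ?posrE // ler_ln ?posrE ?mulr_gt0 // -natrM ler_nat; lia.
have ln2_le : ln (2 : R) <= ln n%:R by rewrite ler_ln ?posrE // ler_nat.
have := harmonic_le_ln (ltn0Sn n); have := ln2_ge_half => ? ?; lra.
Qed.

Lemma flip_prob_ge (n : nat) : (2 <= n)%N -> (4 * n%:R)^-1 <= flip_prob R n.
Proof.
case: n => [|m] // m_ge1; rewrite /flip_prob succnK.
have m_gt0 : (0 : R) < m%:R by rewrite ltr0n.
have -> : 1 - (m.+1%:R : R)^-1 = (1 + m%:R^-1)^-1.
  by rewrite -[m.+1]addn1 natrD; field; rewrite gt_eqF // natr1 pnatr_eq0.
have pow_le4 : (1 + (m%:R : R)^-1) ^+ m <= 4.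
  apply: le_trans (_ : expR (m%:R^-1) ^+ m <= _).
    by rewrite lerXn2r ?nnegrE ?expR_ge0 ?addr_ge0 ?invr_ge0 // expR_ge1Dx.
  by rewrite -expRM_natl mulfV ?gt_eqF // expR1_le4.
have pow_gt0 : 0 < (1 + (m%:R : R)^-1) ^+ m by rewrite exprn_gt0 // addr_gt0 ?invr_gt0.
rewrite exprVn invfM mulrC ler_wpM2l ?invr_ge0 //.
by rewrite lef_pV2 ?posrE.
Qed.

End Estimates.

Theorem lemma5 :
  exists C : nat, forall (R : realType) (A : algo) (n : nat) (p : R)
    (sel : bs n -> seq (bs n * bs n) -> bs n -> R),
    (2 <= n)%N -> 0 < p ->
    valid_sel sel -> good_sel sel p ->
    expected_time_le A sel (C%:R * (n%:R * ln (n%:R : R)) / p).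
Proof.
exists 32%N => R A n p sel n_ge2 p_gt0 sel_valid sel_good N.
set S := \sum_(t < N) _.
have S_ge0 : 0 <= S by rewrite /S; apply: sumr_ge0 => t _; exact: tail_prob_ge0.
have drift : p * flip_prob R n * S <= 8 * ln n%:R.
  have := potential_mass_telescope A sel_valid sel_good N.
  have := potential_mass_ge0 A sel_valid N.
  have := potential_mass0_le A sel.
  have := sum_level_weight_le R n_ge2.
  set X := _ * S; set W := \sum_(k < n.+1) _.
  set m0 := potential_mass _ _ 0; set mN := potential_mass _ _ N => ? ? ? ?; lra.
have : p * S / (4 * n%:R) <= 8 * ln n%:R.
  apply: le_trans drift; rewrite [leRHS]mulrAC.
  by rewrite ler_wpM2l ?mulr_ge0 ?(ltW p_gt0) ?flip_prob_ge.
have n_gt0 : (0 < n)%N by lia.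
rewrite ler_pdivrMr ?mulr_gt0 ?ltr0n //.
by rewrite ler_pdivlMr // => ?; lra.
Qed.
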